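(* Let $L$ be a finite-dimensional Lie algebra over a field $F$ and let $M$ be a maximal subalgebra of $L$. Then $M$ is a c-ideal of $L$ if and only if $\eta(L:M)=\dim(L/M)$.
   Context: For a subalgebra $B$ of $L$, $B_L$ denotes the core of $B$, the largest ideal of $L$ contained in $B$. A subalgebra $B$ is a c-ideal of $L$ if there is an ideal $C$ of $L$ with $L=B+C$ and $B\cap C\subseteq B_L$. For a nonzero subalgebra $X$, the strict core $k(X)$ is the sum of all ideals of $L$ that are proper subalgebras of $X$ (it is $0$ if there are none). A subalgebra $C$ is a completion of $M$ if $C\not\subseteq M$ but every proper subalgebra of $C$ that is an ideal of $L$ is contained in $M$; an ideal completion is a completion that is an ideal of $L$. The ideal index $\eta(L:M)$ is $\dim(C/k(C))$ for any ideal completion $C$ of $M$ (independent of the choice of $C$). *)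

From HB Require Import structures.
From mathcomp Require Import all_boot all_order all_algebra.
Set Implicit Arguments. Unset Strict Implicit. Unset Printing Implicit Defensive.
Import GRing.Theory.
Local Open Scope ring_scope.
Local Open Scope vspace_scope.

Section Lie.
Variables (F : fieldType) (L : vectType F) (br : L -> L -> L).

Definition lie_bracket : Prop :=
  [/\ (forall a x y z, (br (a *: x + y) z = a *: br x z + br y z)%R),
      (forall a x y z, (br z (a *: x + y) = a *: br z x + br z y)%R),
      (forall x, br x x = 0%R) &
      (forall x y z, (br x (br y z) + br y (br z x) + br z (br x y) = 0)%R)].

Definition subalgebra (U : {vspace L}) : Prop :=
  forall x y, x \in U -> y \in U -> br x y \in U.

Definition lie_ideal (I : {vspace L}) : Prop :=
  forall x y, y \in I -> br x y \in I.

Definition maximal_subalgebra (M : {vspace L}) : Prop :=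
  [/\ subalgebra M, M != fullv &
      forall U, subalgebra U -> (M <= U)%VS -> U = M \/ U = fullv].

Definition is_core (B K : {vspace L}) : Prop :=
  [/\ lie_ideal K, (K <= B)%VS &
      forall I, lie_ideal I -> (I <= B)%VS -> (I <= K)%VS].

Definition c_ideal (B : {vspace L}) : Prop :=
  exists C, [/\ lie_ideal C, (B + C)%VS = fullv &
     exists K, is_core B K /\ (B :&: C <= K)%VS].

Definition is_sum_of (P : {vspace L} -> Prop) (K : {vspace L}) : Prop :=
  (forall I, P I -> (I <= K)%VS) /\
  (forall K', (forall I, P I -> (I <= K')%VS) -> (K <= K')%VS).

Definition proper_ideal_in (X I : {vspace L}) : Prop :=
  [/\ subalgebra I, lie_ideal I, (I <= X)%VS & I != X].

Definition is_strict_core (X K : {vspace L}) : Prop :=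
  is_sum_of (proper_ideal_in X) K.

Definition completion (M C : {vspace L}) : Prop :=
  [/\ subalgebra C, ~~ (C <= M)%VS &
      forall I, proper_ideal_in C I -> (I <= M)%VS].

Definition ideal_completion (M C : {vspace L}) : Prop :=
  completion M C /\ lie_ideal C.

(* eta(L:M) = n : dim(C / k(C)) = n for (any) ideal completion C of M *)
Definition ideal_index_is (M : {vspace L}) (n : nat) : Prop :=
  forall C K, ideal_completion M C -> is_strict_core C K ->
    (\dim C - \dim K)%N = n.

End Lie.

(** Let C be an ideal completion of M.  Every proper ideal of L inside C lies
   in M, so the strict core k(C) is the largest ideal of L contained in M ∩ C;
   and since C ⊄ M and M is maximal, M + C = L, whence
   dim C - dim (M ∩ C) = dim L - dim M.  Thus η(L:M) = dim(L/M) exactly when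
   M ∩ C is itself an ideal.  If M is a c-ideal with supplement D, then either
   C ⊆ D, so M ∩ C ⊆ M ∩ D ⊆ M_L, or C ∩ D is proper in C, hence lies in M_L,
   and then M ∩ C + M_L is an ideal inside M; in both cases M ∩ C ⊆ M_L and
   M ∩ C is an ideal.  Conversely, if M ∩ C is an ideal then C itself
   witnesses that M is a c-ideal. *)
From mathcomp Require Import all_boot all_order all_algebra.
From mathcomp Require Import zify.
From Stdlib Require Import Classical.
Set Implicit Arguments. Unset Strict Implicit. Unset Printing Implicit Defensive.
Import GRing.Theory.
Local Open Scope ring_scope.

Section LieBracket.
Variables (F : fieldType) (L : vectType F) (br : L -> L -> L).
Hypothesis Hbr : lie_bracket br.

Lemma brDl x y z : br (x + y) z = br x z + br y z.
Proof. by case: Hbr => brl _ _ _; rewrite -{1}(scale1r x) brl scale1r. Qed.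

Lemma brDr x y z : br z (x + y) = br z x + br z y.
Proof. by case: Hbr => _ brr _ _; rewrite -{1}(scale1r x) brr scale1r. Qed.

Lemma br0r z : br z 0 = 0.
Proof. by apply: (@addrI _ (br z 0)); rewrite -brDr !addr0. Qed.

Lemma brC x y : br x y = - br y x.
Proof.
case: Hbr => _ _ br_alt _; apply/eqP; rewrite -addr_eq0.
by have := br_alt (x + y); rewrite brDl !brDr !br_alt add0r addr0 addrC => ->.
Qed.

End LieBracket.

Local Open Scope vspace_scope.

Section GreatestSubspace.
Variables (F : fieldType) (L : vectType F).

Lemma exists_greatest_subspace (P : {vspace L} -> Prop) (I0 : {vspace L}) :
  (forall I J, P I -> P J -> P (I + J)) -> P I0 ->
  exists K, P K /\ forall J, P J -> J <= K.
Proof.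
move=> PD; suff: forall n I, (\dim {:L} - \dim I <= n)%N -> P I ->
    exists K, P K /\ forall J, P J -> J <= K by apply; apply: leqnn.
elim=> [|n IH] I codimI PI.
  exists I; split=> // J _; suff -> : I = fullv by apply: subvf.
  by apply/eqP; rewrite eqEdim subvf /=; lia.
have [greatest|] := classic (forall J, P J -> J <= I); first by exists I.
move=> /(not_all_ex_not _ _) [J nJ]; have [PJ nJI] := imply_to_and _ _ nJ.
have dimIJ : (\dim I < \dim (I + J))%N.
  rewrite ltnNge; apply/negP=> le_dim; apply: nJI.
  suff /eqP -> : I == I + J by apply: addvSr.
  by rewrite eqEdim addvSl le_dim.
have dimIJL := dimvS (subvf (I + J)).
apply: (IH (I + J)); [lia | exact: PD].
Qed.

Lemma is_sum_of_unique (P : {vspace L} -> Prop) K K' :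
  is_sum_of P K -> is_sum_of P K' -> K = K'.
Proof.
by move=> [ubK lubK] [ubK' lubK']; apply/eqP; rewrite eqEsubv lubK ?lubK'.
Qed.

End GreatestSubspace.

Section LieIdeals.
Variables (F : fieldType) (L : vectType F) (br : L -> L -> L).
Hypothesis Hbr : lie_bracket br.

Lemma lie_ideal_subalgebra I : lie_ideal br I -> subalgebra br I.
Proof. by move=> idI x y _; apply: idI. Qed.

Lemma lie_idealMl I x y : lie_ideal br I -> x \in I -> br x y \in I.
Proof. by move=> idI Ix; rewrite (brC Hbr) memvN idI. Qed.

Lemma lie_ideal0 : lie_ideal br 0.
Proof. by move=> x y; rewrite memv0 => /eqP ->; rewrite (br0r Hbr) mem0v. Qed.

Lemma lie_idealf : lie_ideal br fullv.
Proof. by move=> x y _; apply: memvf. Qed.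

Lemma lie_idealD I J : lie_ideal br I -> lie_ideal br J -> lie_ideal br (I + J).
Proof.
move=> idI idJ x y /memv_addP [u Iu [v Jv ->]].
by rewrite (brDr Hbr) memv_add ?idI ?idJ.
Qed.

Lemma lie_idealI I J : lie_ideal br I -> lie_ideal br J -> lie_ideal br (I :&: J).
Proof. by move=> idI idJ x y; rewrite !memv_cap => /andP [Iy Jy]; rewrite idI ?idJ. Qed.

Lemma subalgebraD_ideal M C :
  subalgebra br M -> lie_ideal br C -> subalgebra br (M + C).
Proof.
move=> subM idC x y /memv_addP [m1 Mm1 [c1 Cc1 ->]] /memv_addP [m2 Mm2 [c2 Cc2 ->]].
rewrite (brDl Hbr) !(brDr Hbr) -!addrA memv_add ?subM //.
apply: memvD; first exact: idC.
by apply: memvD; [apply: lie_idealMl | apply: idC].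
Qed.

Lemma proper_ideal_inW C I :
  lie_ideal br I -> I <= C -> ~~ (C <= I) -> proper_ideal_in br C I.
Proof.
move=> idI IC nCI; split=> //; first exact: lie_ideal_subalgebra.
by apply: contraNneq nCI => ->; apply: subvv.
Qed.

Lemma core_exists U : exists K, is_core br U K.
Proof.
have [K [[idK KU] greatest]] : exists K, (lie_ideal br K /\ K <= U) /\
    forall J, lie_ideal br J /\ J <= U -> J <= K.
  apply: exists_greatest_subspace (conj lie_ideal0 (sub0v U)) => I J [idI IU] [idJ JU].
  by split; [exact: lie_idealD | rewrite subv_add IU JU].
by exists K; split=> // I idI IU; apply: greatest.
Qed.

Lemma core_idealE U K : lie_ideal br U -> is_core br U K -> K = U.
Proof. by move=> idU [_ KU greatest]; apply/eqP; rewrite eqEsubv KU greatest. Qed.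

Lemma ideal_completion_exists M I :
  lie_ideal br I -> ~~ (I <= M) -> exists C, ideal_completion br M C.
Proof.
elim: {I}(\dim I) {-2}I (leqnn (\dim I)) => [|n IH] I dimI idI nIM.
  by move: dimI nIM; rewrite leqn0 dimv_eq0 => /eqP ->; rewrite sub0v.
have [minimal|] := classic (forall J, proper_ideal_in br I J -> J <= M).
  by exists I; do !split=> //; exact: lie_ideal_subalgebra.
move=> /(not_all_ex_not _ _) [J nJ].
have [[_ idJ JI nJI] /negP nJM] := imply_to_and _ _ nJ.
apply: (IH J) => //; have : (\dim J < \dim I)%N.
  by rewrite ltnNge; apply: contra nJI => le_dim; rewrite eqEdim JI.
lia.
Qed.

Lemma strict_core_capv M C K :
  ideal_completion br M C -> is_core br (M :&: C) K -> is_strict_core br C K.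
Proof.
move=> [[_ nCM propC] idC] [idK KMC greatest]; split=> [I propI | K' ub].
  have [_ idI IC _] := propI.
  by apply: greatest => //; rewrite subv_cap IC propC.
apply: ub; apply: proper_ideal_inW => //; first exact: subv_trans KMC (capvSr _ _).
by apply: contra nCM => /subv_trans; apply; apply: subv_trans KMC (capvSl _ _).
Qed.

Lemma strict_core_completion M C K :
  ideal_completion br M C -> is_strict_core br C K -> is_core br (M :&: C) K.
Proof.
move=> complC strictK; have [K' coreK'] := core_exists (M :&: C).
by rewrite (is_sum_of_unique strictK (strict_core_capv complC coreK')).
Qed.

End LieIdeals.

Section MaximalSubalgebra.
Variables (F : fieldType) (L : vectType F) (br : L -> L -> L).
Hypothesis Hbr : lie_bracket br.
Variable M : {vspace L}.
Hypothesis subM : subalgebra br M.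

Lemma c_ideal_capv_ideal C :
  c_ideal br M -> ideal_completion br M C -> lie_ideal br (M :&: C).
Proof.
move=> [D [idD MD [K0 [[idK0 K0M greatest] MDK0]]]] [[_ nCM propC] idC].
suff MCK0 : M :&: C <= K0.
  move=> x y MCy; move: (MCy); rewrite memv_cap => /andP [_ Cy].
  by rewrite memv_cap idC // andbT (subvP K0M) // idK0 // (subvP MCK0).
have [CD | nCD] := boolP (C <= D).
  by apply: subv_trans _ MDK0; rewrite capvS.
(* C :&: D is a proper ideal in C, hence lies in M and so in M :&: D. *)
have CDK0 : C :&: D <= K0.
  apply: subv_trans _ MDK0; rewrite subv_cap capvSr andbT propC //.
  by apply: proper_ideal_inW; [exact: lie_idealI | exact: capvSl | rewrite subv_cap subvv].
have idMCK0 : lie_ideal br (M :&: C + K0).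
  move=> x u /memv_addP [v MCv [k K0k ->]]; rewrite (brDr Hbr).
  have /memv_addP [m Mm [d Dd ->]] : x \in M + D by rewrite MD memvf.
  move: MCv; rewrite memv_cap => /andP [Mv Cv].
  rewrite (brDl Hbr) -addrA; apply: memv_add; first by rewrite memv_cap subM ?idC.
  apply: memvD; last exact: idK0.
  by apply: (subvP CDK0); rewrite memv_cap idC //; apply: lie_idealMl.
by apply: subv_trans (addvSl _ K0) (greatest _ idMCK0 _); rewrite subv_add capvSl.
Qed.

Hypothesis maxM : forall U, subalgebra br U -> M <= U -> U = M \/ U = fullv.

Lemma addv_ideal_full C : lie_ideal br C -> ~~ (C <= M) -> M + C = fullv.
Proof.
move=> idC nCM; have [MCM|//] := maxM (subalgebraD_ideal Hbr subM idC) (addvSl M C).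
by move: nCM; rewrite -MCM addvSr.
Qed.

Lemma dim_ideal_capv C :
  lie_ideal br C -> ~~ (C <= M) -> (\dim C - \dim (M :&: C))%N = (\dim {:L} - \dim M)%N.
Proof. by move=> idC nCM; have := dimv_sum_cap M C; rewrite addv_ideal_full //; lia. Qed.

Lemma capv_ideal_c_ideal C :
  lie_ideal br C -> ~~ (C <= M) -> lie_ideal br (M :&: C) -> c_ideal br M.
Proof.
move=> idC nCM idMC; have [K0 coreK0] := core_exists Hbr M.
exists C; split; rewrite ?addv_ideal_full //; exists K0; split=> //.
by case: coreK0 => _ _ greatest; rewrite greatest ?capvSl.
Qed.

End MaximalSubalgebra.

Theorem theorem2p5 (F : fieldType) (L : vectType F) (br : L -> L -> L)
  (Hbr : lie_bracket br) (M : {vspace L}) (HM : maximal_subalgebra br M) :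
  c_ideal br M <-> ideal_index_is br M (\dim (fullv : {vspace L}) - \dim M)%N.
Proof.
case: HM => subM neqM maxM; split.
- move=> cM C K complC strictK; have [[_ nCM _] idC] := complC.
  have idMC := c_ideal_capv_ideal Hbr subM cM complC.
  rewrite (core_idealE idMC (strict_core_completion Hbr complC strictK)).
  exact: (dim_ideal_capv Hbr subM maxM).
- move=> eta_codim.
  have nLM : ~~ (fullv <= M) by apply: contra neqM => LM; rewrite eqEsubv LM subvf.
  have [C complC] := ideal_completion_exists (@lie_idealf _ _ br) nLM.
  have [[_ nCM _] idC] := complC.
  have [K coreK] := core_exists Hbr (M :&: C); have [idK KMC _] := coreK.
  have := eta_codim C K complC (strict_core_capv complC coreK).
  rewrite -(dim_ideal_capv Hbr subM maxM idC nCM) => dimK.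
  have MCK : M :&: C = K.
    apply/eqP; rewrite eq_sym eqEdim KMC /=.
    by have := dimvS KMC; have := dimvS (capvSr M C); lia.
  by apply: (capv_ideal_c_ideal Hbr subM maxM idC nCM); rewrite MCK.
Qed.
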